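(* Let $\Sigma$ be any set of leapfrog implications (over a signature $\mathcal{R}$). Then the spi-logic $\mathsf{SPi}+\Sigma$ is complex, and hence complete.
   Context: Fix a non-empty set $\mathcal{R}$ (the signature). Sp-formulas are built from propositional variables (from a countably infinite set) and the constant $\top$ using $\wedge$ and unary diamonds $\Diamond_R$, $R\in\mathcal{R}$; an sp-implication is an expression $\sigma\to\tau$ with $\sigma,\tau$ sp-formulas. A SLO (meet-semilattice with monotone operators) is an algebra $\mathfrak{A}=(A,\wedge,\top,\Diamond_R)_{R\in\mathcal{R}}$ such that $(A,\wedge,\top)$ is a meet-semilattice with top element $\top$ and each $\Diamond_R$ is monotone w.r.t. $a\le b\iff a\wedge b=a$. $\mathfrak{A}$ validates $\sigma\to\tau$ if $\sigma[\mathfrak a]\le\tau[\mathfrak a]$ for every valuation $\mathfrak a$ of the variables in $A$. A frame is $\mathfrak{F}=(W,R^{\mathfrak F})_{R\in\mathcal R}$ with $W\neq\emptyset$ and binary relations $R^{\mathfrak F}$; sp-formulas are evaluated in Kripke models over $\mathfrak F$ as usual ($\Diamond_R\varphi$ is true at $w$ iff $\varphi$ is true at some $v$ with $(w,v)\in R^{\mathfrak F}$); $\mathfrak F$ validates $\sigma\to\tau$ if in every model over $\mathfrak F$, at every point, $\sigma$ true implies $\tau$ true. For a set $\Sigma$ of sp-implications: $\Sigma\models_{\mathsf{Kr}}\iota$ iff $\iota$ is valid in every frame validating $\Sigma$; $\Sigma\models_{\mathsf{SLO}}\iota$ iff $\iota$ is valid in every SLO validating $\Sigma$. The spi-logic $\mathsf{SPi}+\Sigma$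 is the set of sp-implications $\iota$ with $\Sigma\models_{\mathsf{SLO}}\iota$ (equivalently, derivable from substitution instances of $\Sigma$ and of $p\to p$, $p\to\top$, $p\wedge q\to q\wedge p$, $p\wedge q\to p$ by the rules: from $\sigma\to\tau,\tau\to\rho$ infer $\sigma\to\rho$; from $\sigma\to\tau,\sigma\to\rho$ infer $\sigma\to\tau\wedge\rho$; from $\sigma\to\tau$ infer $\Diamond_R\sigma\to\Diamond_R\tau$). It is complete if $\Sigma\models_{\mathsf{Kr}}\iota\iff\Sigma\models_{\mathsf{SLO}}\iota$ for every sp-implication $\iota$. For a frame $\mathfrak F$, $\mathfrak F^\star=(2^W,\cap,W,\Diamond_R^+)_{R}$ where $\Diamond_R^+X=\{w\mid \exists v\in X\,(w,v)\in R^{\mathfrak F}\}$. A spi-logic $L$ is complex if every SLO validating $L$ is embeddable (by an injective map preserving $\wedge,\top$ and all $\Diamond_R$) into $\mathfrak F^\star$ for some frame $\mathfrak F$ validating $L$. A profile is $\pi=(\mathfrak G,S,u,v)$ where $\mathfrak G=(\Delta,R^{\mathfrak G})_{R\in\mathcal R}$ is a finite rooted frame, $u,v\in\Delta$, $S\in\mathcal R$ and $(u,v)\notin S^{\mathfrak G}$; with $\Delta=\{x_0,\dots,x_n\}$ it represents the first-order sentence $\Phi_\pi=\forall x_0\dots x_n\big(\bigwedge_{(x_i,x_j)\in R^{\mathfrak G},R\in\mathcal R}R(x_i,x_j)\to S(u,v)\big)$. An sp-implication $\iota$ is a Horn-implication with profile $\pi$ if, for every frame $\mathfrak F$, $\mathfrak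 F$ validates $\iota$ iff $\mathfrak F\models\Phi_\pi$. A profile is a tree-profile if $(\Delta,\bigcup_R R^{\mathfrak G})$ is a finite directed tree and the relations $R^{\mathfrak G}$ are pairwise disjoint; it is rooted if $u$ is the root of this tree; a rooted tree-profile $(\mathfrak G,S,u,v)$ is leapfrog if there is no $w$ with $(u,w)\in S^{\mathfrak G}$. A leapfrog implication is a Horn-implication of the form $\varrho\to\Diamond_S p$ ($p$ a variable) having a leapfrog profile of the form $(\mathfrak G,S,u,v)$. *)

From Stdlib Require Import List Relations FinFun.
Set Implicit Arguments.

Section Defs.
Variable Sig : Type.

Inductive spf : Type :=
| Var : nat -> spf
| Top : spf
| And : spf -> spf -> spf
| Dia : Sig -> spf -> spf.

Definition spi : Type := (spf * spf)%type.

Record SLO : Type := {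
  car : Type;
  meet : car -> car -> car;
  top : car;
  dia : Sig -> car -> car;
  meet_assoc : forall a b c, meet a (meet b c) = meet (meet a b) c;
  meet_comm : forall a b, meet a b = meet b a;
  meet_idem : forall a, meet a a = a;
  meet_top : forall a, meet a top = a;
  dia_mono : forall R a b, meet a b = a -> meet (dia R a) (dia R b) = dia R a
}.

Definition sle (A : SLO) (a b : car A) : Prop := meet A a b = a.

Fixpoint aeval (A : SLO) (val : nat -> car A) (f : spf) : car A :=
  match f with
  | Var n => val n
  | Top => top A
  | And f g => meet A (aeval A val f) (aeval A val g)
  | Dia R f => dia A R (aeval A val f)
  end.

Definition slo_valid (A : SLO) (i : spi) : Prop :=
  forall val : nat -> car A, sle A (aeval A val (fst i)) (aeval A val (snd i)).

Record frame : Type := {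
  W : Type;
  W_ne : inhabited W;
  rel : Sig -> W -> W -> Prop
}.

Fixpoint sat (F : frame) (V : nat -> W F -> Prop) (w : W F) (f : spf) : Prop :=
  match f with
  | Var n => V n w
  | Top => True
  | And f g => sat F V w f /\ sat F V w g
  | Dia R f => exists v, rel F R w v /\ sat F V v f
  end.

Definition frame_valid (F : frame) (i : spi) : Prop :=
  forall (V : nat -> W F -> Prop) (w : W F), sat F V w (fst i) -> sat F V w (snd i).

Definition kr_conseq (Sigma : spi -> Prop) (i : spi) : Prop :=
  forall F : frame, (forall j, Sigma j -> frame_valid F j) -> frame_valid F i.

Definition slo_conseq (Sigma : spi -> Prop) (i : spi) : Prop :=
  forall A : SLO, (forall j, Sigma j -> slo_valid A j) -> slo_valid A i.

Definition spi_logic (Sigma : spi -> Prop) : spi -> Prop := slo_conseq Sigma.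

Definition complete (Sigma : spi -> Prop) : Prop :=
  forall i, kr_conseq Sigma i <-> slo_conseq Sigma i.

(* embeddability of an SLO into the complex algebra F^* = (2^W, cap, W, Dia^+) ;
   subsets of W are represented as predicates W -> Prop *)
Definition embeds_into_complex (A : SLO) (F : frame) : Prop :=
  exists h : car A -> (W F -> Prop),
    (forall a b, h a = h b -> a = b) /\
    (forall a b, h (meet A a b) = (fun w => h a w /\ h b w)) /\
    h (top A) = (fun _ => True) /\
    (forall R a, h (dia A R a) = (fun w => exists v, rel F R w v /\ h a v)).

Definition complex (L : spi -> Prop) : Prop :=
  forall A : SLO, (forall i, L i -> slo_valid A i) ->
    exists F : frame, (forall i, L i -> frame_valid F i) /\ embeds_into_complex A F.

Definition edge (D : Type) (RG : Sig -> D -> D -> Prop) (x y : D) : Prop :=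
  exists R, RG R x y.

Definition rooted_frame (D : Type) (RG : Sig -> D -> D -> Prop) : Prop :=
  exists r, forall x, clos_refl_trans D (edge RG) r x.

Definition is_profile (D : Type) (RG : Sig -> D -> D -> Prop) (S : Sig) (u v : D) : Prop :=
  Finite D /\ inhabited D /\ rooted_frame RG /\ ~ RG S u v.

(* first-order sentence Phi_pi holds in frame F *)
Definition frame_sat_profile (F : frame) (D : Type) (RG : Sig -> D -> D -> Prop)
  (S : Sig) (u v : D) : Prop :=
  forall f : D -> W F,
    (forall R x y, RG R x y -> rel F R (f x) (f y)) -> rel F S (f u) (f v).

Definition dtree_rooted_at (D : Type) (E : D -> D -> Prop) (r : D) : Prop :=
  (forall x, ~ E x r) /\
  (forall x, x <> r -> exists! y, E y x) /\
  (forall x, clos_refl_trans D E r x).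

Definition leapfrog_profile (D : Type) (RG : Sig -> D -> D -> Prop) (S : Sig) (u v : D) : Prop :=
  is_profile RG S u v /\
  (exists r, dtree_rooted_at (edge RG) r) /\
  (forall R R' x y, R <> R' -> RG R x y -> RG R' x y -> False) /\
  dtree_rooted_at (edge RG) u /\
  (forall w, ~ RG S u w).

Definition horn_with_profile (i : spi) (D : Type) (RG : Sig -> D -> D -> Prop)
  (S : Sig) (u v : D) : Prop :=
  forall F : frame, frame_valid F i <-> frame_sat_profile F RG S u v.

Definition leapfrog_implication (i : spi) : Prop :=
  exists (rho : spf) (S : Sig) (p : nat),
    i = (rho, Dia S (Var p)) /\
    exists (D : Type) (RG : Sig -> D -> D -> Prop) (u v : D),
      leapfrog_profile RG S u v /\ horn_with_profile i RG S u v.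

End Defs.

From Stdlib Require Import List Relations FinFun Classical FunctionalExtensionality
  PropExtensionality PeanoNat Lia.
Set Implicit Arguments.

(* Every SLO A embeds, via a |-> {P | a \in P}, into the complex algebra of its
   filter frame, in which Q is an R-successor of P when <>_R b \in P for all
   b \in Q.  So it suffices that the filter frame of an SLO validating a
   leapfrog implication rho -> <>_S p validates it too, i.e. (Horn
   correspondence) that every edge-preserving image f of the profile tree has
   S(f u, f v).  This holds because rho is already true at the root u of the
   profile under the valuation making p true at v only: such a model is glued
   from two countermodels, the profile itself and the profile enlarged by all
   S-edges u -> y with y <> v.  Both refute the implication exactly at the
   root, since a finite tree has no edge-preserving self-map moving its root.
   Completeness follows because embeddings reflect validity. *)

Lemma pred_ext (T : Type) (X Y : T -> Prop) : (forall w, X w <-> Y w) -> X = Y.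
Proof.
  intro H. apply functional_extensionality; intro w. apply propositional_extensionality, H.
Qed.

Section General.
Variable Sig : Type.

Section SLOOrder.
Variable A : SLO Sig.

Lemma sle_refl a : sle A a a.
Proof. apply meet_idem. Qed.

Lemma sle_trans a b c : sle A a b -> sle A b c -> sle A a c.
Proof. unfold sle; intros Hab Hbc. rewrite <- Hab at 1. rewrite <- meet_assoc, Hbc. exact Hab. Qed.

Lemma sle_top a : sle A a (top A).
Proof. apply meet_top. Qed.

Lemma sle_meet_l a b : sle A (meet A a b) a.
Proof.
  unfold sle. rewrite <- meet_assoc, (meet_comm A b a), meet_assoc, meet_idem. reflexivity.
Qed.

Lemma sle_meet_r a b : sle A (meet A a b) b.
Proof. unfold sle. rewrite <- meet_assoc, meet_idem. reflexivity. Qed.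

Lemma sle_meet a b c : sle A a b -> sle A a c -> sle A a (meet A b c).
Proof. unfold sle; intros Hab Hac. rewrite meet_assoc, Hab, Hac. reflexivity. Qed.

Lemma sle_antisym a b : sle A a b -> sle A b a -> a = b.
Proof. unfold sle; intros Hab Hba. rewrite <- Hab, meet_comm. exact Hba. Qed.

End SLOOrder.

Lemma aeval_embedding {A : SLO Sig} {F : frame Sig} {h : car A -> W F -> Prop} :
  (forall a b, h (meet A a b) = (fun w => h a w /\ h b w)) ->
  h (top A) = (fun _ => True) ->
  (forall R a, h (dia A R a) = (fun w => exists v, rel F R w v /\ h a v)) ->
  forall val phi w, h (aeval A val phi) w <-> sat F (fun n => h (val n)) w phi.
Proof.
  intros Hmeet Htop Hdia val phi; induction phi as [n | | phi1 IH1 phi2 IH2 | R phi IH];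
    intro w; simpl.
  - tauto.
  - rewrite Htop; tauto.
  - rewrite Hmeet, IH1, IH2; tauto.
  - rewrite Hdia. split; intros [x [Hwx Hx]]; exists x; split; auto; apply IH; exact Hx.
Qed.

Lemma slo_valid_of_embeds (A : SLO Sig) (F : frame Sig) i :
  embeds_into_complex A F -> frame_valid F i -> slo_valid A i.
Proof.
  intros [h [Hinj [Hmeet [Htop Hdia]]]] HF val. apply Hinj. rewrite Hmeet.
  apply pred_ext; intro w. split; [tauto |]. intro Hw. split; [exact Hw |].
  apply (aeval_embedding Hmeet Htop Hdia), HF, (aeval_embedding Hmeet Htop Hdia), Hw.
Qed.

Section ComplexAlgebra.
Variable F : frame Sig.

Definition complex_algebra : SLO Sig.
Proof.
  refine (@Build_SLO Sig (W F -> Prop) (fun X Y w => X w /\ Y w) (fun _ => True)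
            (fun R X w => exists v, rel F R w v /\ X v) _ _ _ _ _).
  1-4: intros; apply pred_ext; tauto.
  intros R X Y HXY. apply pred_ext; intro w.
  split; [tauto |]. intros [x [Hwx Hx]]. split; [exists x; tauto |].
  exists x. split; [exact Hwx |]. rewrite <- HXY in Hx. exact (proj2 Hx).
Defined.

Lemma complex_algebra_embeds : embeds_into_complex complex_algebra F.
Proof. exists (fun X => X). repeat split; auto. Qed.

Lemma aeval_complex_algebra val phi w : aeval complex_algebra val phi w <-> sat F val w phi.
Proof.
  exact (aeval_embedding (A := complex_algebra) (h := fun X => X)
           (fun _ _ => eq_refl) eq_refl (fun _ _ => eq_refl) val phi w).
Qed.

Lemma complex_algebra_valid i : slo_valid complex_algebra i <-> frame_valid F i.
Proof.
  split; [| apply slo_valid_of_embeds, complex_algebra_embeds].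
  intros H V w Hw. apply aeval_complex_algebra. apply aeval_complex_algebra in Hw.
  rewrite <- (H V) in Hw. exact (proj2 Hw).
Qed.

End ComplexAlgebra.

Lemma sat_morph_on (F1 F2 : frame Sig) (X : W F1 -> Prop) (k : W F1 -> W F2)
  (V1 : nat -> W F1 -> Prop) (V2 : nat -> W F2 -> Prop) :
  (forall R x y, X x -> rel F1 R x y -> X y /\ rel F2 R (k x) (k y)) ->
  (forall n x, X x -> V1 n x -> V2 n (k x)) ->
  forall phi x, X x -> sat F1 V1 x phi -> sat F2 V2 (k x) phi.
Proof.
  intros Hrel Hval phi; induction phi as [n | | phi1 IH1 phi2 IH2 | R phi IH];
    intros x Hx; simpl; auto.
  - intros [H1 H2]; auto.
  - intros [y [Hxy Hy]]. destruct (Hrel R x y Hx Hxy) as [HXy Hk]. exists (k y); auto.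
Qed.

Lemma sat_morph (F1 F2 : frame Sig) (k : W F1 -> W F2)
  (V1 : nat -> W F1 -> Prop) (V2 : nat -> W F2 -> Prop) :
  (forall R x y, rel F1 R x y -> rel F2 R (k x) (k y)) ->
  (forall n x, V1 n x -> V2 n (k x)) ->
  forall phi x, sat F1 V1 x phi -> sat F2 V2 (k x) phi.
Proof.
  intros Hrel Hval phi x.
  apply (sat_morph_on F1 F2 (fun _ => True)); auto.
Qed.

Section FilterFrame.
Variable A : SLO Sig.

Definition is_filter (P : car A -> Prop) : Prop :=
  P (top A) /\ (forall a b, P a -> sle A a b -> P b) /\ (forall a b, P a -> P b -> P (meet A a b)).

Definition slo_filter : Type := { P : car A -> Prop | is_filter P }.

Definition principal (a : car A) : slo_filter.
Proof.
  exists (fun x => sle A a x). split; [| split].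
  - apply sle_top.
  - intros x y Hax Hxy. exact (sle_trans Hax Hxy).
  - apply sle_meet.
Defined.

Definition filter_frame : frame Sig :=
  {| W := slo_filter; W_ne := inhabits (principal (top A));
     rel := fun R P Q => forall b, proj1_sig Q b -> proj1_sig P (dia A R b) |}.

Definition filter_embedding (a : car A) (P : W filter_frame) : Prop := proj1_sig P a.

Lemma filter_embedding_meet a b :
  filter_embedding (meet A a b) = (fun P => filter_embedding a P /\ filter_embedding b P).
Proof.
  apply pred_ext; intro P. unfold filter_embedding.
  destruct (proj2_sig P) as [_ [Hup Hmeet]]. split.
  - intro Hab. split; eapply Hup; [exact Hab | apply sle_meet_l | exact Hab | apply sle_meet_r].
  - intros [Ha Hb]; auto.
Qed.

Lemma filter_embedding_top : filter_embedding (top A) = (fun _ => True).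
Proof.
  apply pred_ext; intro P. unfold filter_embedding.
  split; [tauto | intros _; apply (proj2_sig P)].
Qed.

(* The witness for [<>_R a \in P] is the principal filter of [a]. *)
Lemma filter_embedding_dia R a :
  filter_embedding (dia A R a)
  = (fun P => exists Q, rel filter_frame R P Q /\ filter_embedding a Q).
Proof.
  apply pred_ext; intro P. unfold filter_embedding.
  destruct (proj2_sig P) as [_ [Hup _]]. split.
  - intro Ha. exists (principal a). simpl. split; [| apply sle_refl].
    intros b Hab. eapply Hup; [exact Ha | apply dia_mono, Hab].
  - intros [Q [HPQ HQa]]. exact (HPQ a HQa).
Qed.

Lemma filter_embedding_inj a b : filter_embedding a = filter_embedding b -> a = b.
Proof.
  intro Hab. apply sle_antisym.
  - change (filter_embedding b (principal a)). rewrite <- Hab. apply sle_refl.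
  - change (filter_embedding a (principal b)). rewrite Hab. apply sle_refl.
Qed.

Lemma filter_frame_embeds : embeds_into_complex A filter_frame.
Proof.
  exists filter_embedding. split; [exact filter_embedding_inj |].
  split; [exact filter_embedding_meet |].
  split; [exact filter_embedding_top | exact filter_embedding_dia].
Qed.

Lemma sat_filter_frame val phi (P : W filter_frame) :
  sat filter_frame (fun n Q => proj1_sig Q (val n)) P phi <-> proj1_sig P (aeval A val phi).
Proof.
  symmetry.
  exact (aeval_embedding filter_embedding_meet filter_embedding_top filter_embedding_dia val phi P).
Qed.

End FilterFrame.

Lemma complex_of_filter_frame_valid (Sigma : spi Sig -> Prop) :
  (forall A j, Sigma j -> slo_valid A j -> frame_valid (filter_frame A) j) ->
  complex (spi_logic Sigma).
Proof.
  intros Hpersist A HA. exists (filter_frame A). split; [| apply filter_frame_embeds].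
  intros i Hi. apply complex_algebra_valid, Hi. intros j Hj.
  apply complex_algebra_valid, Hpersist; [exact Hj |].
  apply HA. intros B HB. exact (HB j Hj).
Qed.

Lemma complete_of_complex (Sigma : spi Sig -> Prop) :
  complex (spi_logic Sigma) -> complete Sigma.
Proof.
  intros Hcx i. split.
  - intros Hkr A HA.
    destruct (Hcx A (fun j Hj => Hj A HA)) as [F [HF Hemb]].
    apply (slo_valid_of_embeds Hemb), Hkr. intros j Hj. apply HF.
    intros B HB. exact (HB j Hj).
  - intros Hslo F HF. apply complex_algebra_valid, Hslo.
    intros j Hj. apply complex_algebra_valid, HF, Hj.
Qed.

End General.

Lemma finite_not_injective_nat (T : Type) (g : nat -> T) : Finite T -> ~ Injective g.
Proof.
  intros [l Hl] Hinj.
  assert (Hnd : NoDup (map g (seq 0 (S (length l)))))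
    by (apply Injective_map_NoDup; [exact Hinj | apply seq_NoDup]).
  pose proof (NoDup_incl_length Hnd (fun x _ => Hl x)) as Hlen.
  rewrite length_map, length_seq in Hlen. lia.
Qed.

Lemma clos_trans_last_step (A : Type) (R : relation A) x z :
  clos_trans A R x z -> R x z \/ exists t, clos_trans A R x t /\ R t z.
Proof.
  intro Hxz. destruct (clos_trans_tn1 _ _ _ _ Hxz) as [z Hxz' | t z Htz Hxt].
  - left; exact Hxz'.
  - right; exists t. split; [apply clos_tn1_trans, Hxt | exact Htz].
Qed.

Section Tree.
Variables (Sig D : Type) (RG : Sig -> D -> D -> Prop) (u : D).
Hypothesis tree : dtree_rooted_at (edge RG) u.

Lemma tree_root_no_in_edge {R x y} : RG R x y -> y <> u.
Proof. intros Hxy ->. apply (proj1 tree x). exists R; exact Hxy. Qed.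

Lemma tree_reach_nonroot x : x <> u -> clos_trans D (edge RG) u x.
Proof.
  intro Hx. pose proof (clos_rt_rtn1 _ _ _ _ (proj2 (proj2 tree) x)) as Hux.
  destruct Hux as [| y z Hyz Huy]; [contradiction |].
  exact (clos_rt_t _ _ _ _ _ (clos_rtn1_rt _ _ _ _ Huy) (t_step _ _ _ _ Hyz)).
Qed.

Lemma tree_root_has_child x : x <> u -> exists R c, RG R u c.
Proof.
  intro Hx.
  destruct (clos_trans_t1n _ _ _ _ (tree_reach_nonroot Hx)) as [c [R Huc] | c y [R Huc] _];
    exists R, c; exact Huc.
Qed.

(* Along the path from the root, a cycle through [z] passes through the unique
   parent of [z]; the root has no parent, so it lies on no cycle. *)
Lemma tree_acyclic x : ~ clos_trans D (edge RG) x x.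
Proof.
  destruct tree as [Hroot [Hparent Hreach]].
  pose proof (clos_rt_rtn1 _ _ _ _ (Hreach x)) as Hux.
  induction Hux as [| y z Hyz Huy IH]; intro Hcyc;
    destruct (clos_trans_last_step Hcyc) as [Hlast | [t [Hzt Hlast]]].
  - exact (Hroot u Hlast).
  - exact (Hroot t Hlast).
  - apply IH. assert (Hz : z <> u) by (intros ->; exact (Hroot y Hyz)).
    destruct (Hparent z Hz) as [w [_ Huniq]].
    assert (Hzy : z = y) by (rewrite <- (Huniq z Hlast); apply Huniq, Hyz).
    rewrite Hzy in Hyz. apply t_step, Hyz.
  - apply IH. assert (Hz : z <> u) by (intros ->; exact (Hroot y Hyz)).
    destruct (Hparent z Hz) as [w [_ Huniq]].
    assert (Hty : t = y) by (rewrite <- (Huniq t Hlast); apply Huniq, Hyz).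
    rewrite Hty in Hzt. exact (t_trans _ _ _ _ _ (t_step _ _ _ _ Hyz) Hzt).
Qed.

Hypothesis finite : Finite D.

(* Otherwise the orbit u, f u, f (f u), ... would be an infinite path. *)
Lemma tree_endo_fixes_root (f : D -> D) :
  (forall R x y, RG R x y -> RG R (f x) (f y)) -> f u = u.
Proof.
  intro Hf. apply NNPP; intro Hmoved.
  assert (Hmono : forall x y, clos_trans D (edge RG) x y -> clos_trans D (edge RG) (f x) (f y)).
  { induction 1 as [x y [R Hxy] | x y z _ IHxy _ IHyz].
    - apply t_step. exists R; apply Hf, Hxy.
    - exact (t_trans _ _ _ _ _ IHxy IHyz). }
  set (g n := Nat.iter n f u).
  assert (Hstep : forall n, clos_trans D (edge RG) (g n) (g (S n))).
  { induction n as [| n IH]; [exact (tree_reach_nonroot Hmoved) | exact (Hmono _ _ IH)]. }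
  assert (Hlt : forall i j, i < j -> clos_trans D (edge RG) (g i) (g j)).
  { induction 1 as [| j _ IH]; [apply Hstep | exact (t_trans _ _ _ _ _ IH (Hstep j))]. }
  apply (finite_not_injective_nat finite (g := g)). intros i j Hij.
  destruct (Nat.lt_trichotomy i j) as [Hi | [Hi | Hi]]; [exfalso | exact Hi | exfalso].
  - apply (tree_acyclic (x := g j)). rewrite <- Hij at 1. exact (Hlt i j Hi).
  - apply (tree_acyclic (x := g i)). rewrite Hij at 1. exact (Hlt j i Hi).
Qed.

End Tree.

Section Leapfrog.
Variables (Sig D : Type) (RG : Sig -> D -> D -> Prop) (S : Sig) (u v : D).
Variables (p : nat) (rho : spf Sig).
Hypothesis leapfrog : leapfrog_profile RG S u v.
Hypothesis horn : horn_with_profile (rho, Dia S (Var Sig p)) RG S u v.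

Let finite : Finite D := proj1 (proj1 leapfrog).
Let not_Suv : ~ RG S u v := proj2 (proj2 (proj2 (proj1 leapfrog))).
Let tree : dtree_rooted_at (edge RG) u := proj1 (proj2 (proj2 (proj2 leapfrog))).
Let no_S_from_root : forall w, ~ RG S u w := proj2 (proj2 (proj2 (proj2 leapfrog))).

Definition frame_on (r : Sig -> D -> D -> Prop) : frame Sig :=
  {| W := D; W_ne := inhabits u; rel := r |}.

Lemma sat_off_root (r1 r2 : Sig -> D -> D -> Prop) V phi x :
  (forall R y z, y <> u -> r1 R y z -> RG R y z /\ r2 R y z) ->
  x <> u -> sat (frame_on r1) V x phi -> sat (frame_on r2) V x phi.
Proof.
  intro Hr.
  apply (sat_morph_on (frame_on r1) (frame_on r2) (fun y => y <> u) (fun y => y)); auto.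
  intros R y z Hy Hyz. destruct (Hr R y z Hy Hyz) as [HG H2].
  split; [exact (tree_root_no_in_edge tree HG) | exact H2].
Qed.

Lemma refuted_of_not_profile (r : Sig -> D -> D -> Prop) :
  ~ frame_sat_profile (frame_on r) RG S u v ->
  exists V w, sat (frame_on r) V w rho /\ ~ sat (frame_on r) V w (Dia S (Var Sig p)).
Proof.
  rewrite <- (horn (frame_on r)). intro Hnot. apply NNPP; intro Hnone.
  apply Hnot. intros V w Hw. apply NNPP; intro Hn. apply Hnone. exists V, w. split; assumption.
Qed.

Definition pruned (R : Sig) (x y : D) : Prop := RG R x y /\ x <> u.

(* An edge-preserving map from the profile into [pruned] would be an
   endomorphism of the tree moving the root, since the root has no successor
   in [pruned]. *)
Lemma pruned_valid x : x <> u -> frame_valid (frame_on pruned) (rho, Dia S (Var Sig p)).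
Proof.
  intro Hx. apply horn. intros f Hf. exfalso.
  destruct (tree_root_has_child tree Hx) as [R [c Huc]].
  apply (proj2 (Hf R u c Huc)).
  apply (tree_endo_fixes_root tree finite). intros R' y z Hyz. exact (proj1 (Hf R' y z Hyz)).
Qed.

Lemma refutation_at_root (r : Sig -> D -> D -> Prop) V w :
  (forall R x y, x <> u -> (r R x y <-> RG R x y)) ->
  sat (frame_on r) V w rho -> ~ sat (frame_on r) V w (Dia S (Var Sig p)) -> w = u.
Proof.
  intros Hr Hrho Hn. apply NNPP; intro Hw. apply Hn.
  apply (sat_morph (frame_on pruned) (frame_on r) (fun y => y) V); auto.
  { intros R x y [Hxy Hx]. apply Hr; assumption. }
  apply (pruned_valid Hw). apply (sat_off_root (r1 := r) pruned); auto.
  intros R x y Hx Hxy. apply Hr in Hxy; [| exact Hx]. repeat split; assumption.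
Qed.

Definition extended (R : Sig) (x y : D) : Prop := RG R x y \/ (R = S /\ x = u /\ y <> v).

Lemma profile_refuted_at_root : exists V, sat (frame_on RG) V u rho.
Proof.
  destruct (refuted_of_not_profile (r := RG)) as [V [w [Hrho Hn]]].
  { intro Hsat. exact (not_Suv (Hsat (fun x => x) (fun R x y Hxy => Hxy))). }
  exists V. rewrite <- (refutation_at_root (r := RG) (V := V) (w := w)); auto. tauto.
Qed.

Lemma extended_refuted_at_root :
  exists V, (forall y, V p y -> y = v) /\ sat (frame_on extended) V u rho.
Proof.
  destruct (refuted_of_not_profile (r := extended)) as [V [w [Hrho Hn]]].
  { intro Hsat. destruct (Hsat (fun x => x) (fun R x y Hxy => or_introl Hxy)) as [H | [_ [_ H]]].
    - exact (not_Suv H).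
    - exact (H eq_refl). }
  assert (Hw : w = u).
  { apply (refutation_at_root (r := extended) (V := V)); auto.
    intros R x y Hx. unfold extended.
    split; [intros [H | [_ [E _]]]; [exact H | contradiction] | now left]. }
  subst w. exists V. split; [| exact Hrho].
  intros y Hy. apply NNPP; intro Hyv. apply Hn. exists y. split; [right; auto | exact Hy].
Qed.

(* At the root, [extended] may use its new S-edges; but a formula also true at
   the root of the profile has no top-level S-diamond there, as the root of a
   leapfrog profile has no S-successor. *)
Lemma sat_root_glue V' V phi :
  sat (frame_on RG) V' u phi -> sat (frame_on extended) V u phi -> sat (frame_on RG) V u phi.
Proof.
  induction phi as [n | | phi1 IH1 phi2 IH2 | R phi IH]; simpl; auto.
  - intros [H1 H2] [H3 H4]; auto.
  - intros [y' [Huy' _]] [y [[Huy | [-> _]] Hy]].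
    + exists y. split; [exact Huy |].
      apply (sat_off_root (r1 := extended) RG);
        [| exact (tree_root_no_in_edge tree Huy) | exact Hy].
      intros R' x z Hx [Hxz | [_ [E _]]]; [auto | contradiction].
    + exfalso. exact (no_S_from_root Huy').
Qed.

Definition root_val (n : nat) (x : D) : Prop := n = p -> x = v.

Lemma sat_root_val : sat (frame_on RG) root_val u rho.
Proof.
  destruct profile_refuted_at_root as [V' HV'].
  destruct extended_refuted_at_root as [V [HVp HV]].
  apply (sat_morph (frame_on RG) (frame_on RG) (fun x => x) V); auto.
  - intros n x Hx ->. exact (HVp x Hx).
  - exact (sat_root_glue V' V rho HV' HV).
Qed.

End Leapfrog.

Lemma leapfrog_filter_frame_valid (Sig : Type) (A : SLO Sig) (i : spi Sig) :
  leapfrog_implication i -> slo_valid A i -> frame_valid (filter_frame A) i.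
Proof.
  intros [rho [S [p [-> [D [RG [u [v [Hlp Hhorn]]]]]]]]] HA.
  apply (proj2 (Hhorn (filter_frame A))). intros f Hf a Ha.
  set (val n := if Nat.eq_dec n p then a else top A).
  assert (Hrho : proj1_sig (f u) (aeval A val rho)).
  { apply sat_filter_frame.
    apply (sat_morph (frame_on u RG) (filter_frame A) f (root_val v p)); auto.
    - intros n x Hx. unfold val. destruct (Nat.eq_dec n p) as [E | _].
      + rewrite (Hx E). exact Ha.
      + apply (proj2_sig (f x)).
    - exact (sat_root_val Hlp Hhorn). }
  destruct (proj2_sig (f u)) as [_ [Hup _]]. apply (Hup _ _ Hrho).
  specialize (HA val). simpl in HA. unfold val at 2 in HA.
  destruct (Nat.eq_dec p p) as [_ | Hpp]; [exact HA | contradiction].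
Qed.

Theorem theorem5p9 (Sig : Type) (Sig_ne : inhabited Sig) (Sigma : spi Sig -> Prop)
  (HSigma : forall i, Sigma i -> leapfrog_implication i) :
  complex (spi_logic Sigma) /\ complete Sigma.
Proof.
  assert (Hcx : complex (spi_logic Sigma)).
  { apply complex_of_filter_frame_valid. intros A j Hj.
    apply leapfrog_filter_frame_valid, HSigma, Hj. }
  split; [exact Hcx | exact (complete_of_complex Hcx)].
Qed.
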